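(* Let $A$ be a real $n\times n$ matrix with strictly negative diagonal, sign matrix $\mathcal{E}_A=(\epsilon_{ij})$, connectivity graph $G_A$ and clique complex $X(G_A)$. Suppose (i) $\epsilon_{ij}\epsilon_{ji}=1$ whenever $\{i,j\}$ ($i\neq j$) is a clique of $X(G_A)$; (ii) $\epsilon_{ij}\epsilon_{jk}\epsilon_{ki}=-1$ whenever $\{i,j,k\}$ (distinct) is a clique of $X(G_A)$; and (iii) $H^1(X(G_A);\mathbb{Z}_2)=0$. Then $A$ is a bipartite matrix.
   Context: The sign matrix $\mathcal{E}_A=(\epsilon_{ij})$ has $\epsilon_{ij}\in\{1,-1,0\}$ equal to the sign of $A_{ij}$. The connectivity graph $G_A$ is the simple graph on $\{1,\dots,n\}$ containing edge $(ij)$, $i\ne j$, unless $A_{ij}=A_{ji}=0$. $X(G_A)$ is its clique complex: the abstract simplicial complex whose simplices are the cliques (sets of pairwise adjacent vertices); cohomology is simplicial cohomology. A real $n\times n$ matrix $A$ is bipartite if $\{1,\dots,n\}$ can be partitioned into disjoint sets $\sigma,\bar\sigma$ such that: if $i\in\sigma,j\in\bar\sigma$ then $A_{ij}\ge0$ and $A_{ji}\ge0$; and if $i,j\in\sigma$ or $i,j\in\bar\sigma$ then $A_{ij}\le0$ and $A_{ji}\le0$. *)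

From HB Require Import structures.
From mathcomp Require Import all_boot all_order all_algebra.
Set Implicit Arguments. Unset Strict Implicit. Unset Printing Implicit Defensive.
Import Order.TTheory GRing.Theory Num.Theory.
Local Open Scope ring_scope.

Section Defs.
Variables (R : realFieldType) (n : nat).

Definition eps (A : 'M[R]_n) (i j : 'I_n) : R := Num.sg (A i j).

Definition adjA (A : 'M[R]_n) (i j : 'I_n) : bool :=
  (i != j) && ((A i j != 0) || (A j i != 0)).

(* cliques of G_A = simplices of the clique complex X(G_A) *)
Definition clique (A : 'M[R]_n) (s : {set 'I_n}) : bool :=
  [forall i in s, forall j in s, (i != j) ==> adjA A i j].

Definition simplex (A : 'M[R]_n) (k : nat) (s : {set 'I_n}) : bool :=
  clique A s && (#|s| == k.+1)%N.

(* Z_2-valued cochains: functions on vertex sets (only values on simplices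
   matter). Simplicial coboundary with Z_2 coefficients (signs irrelevant):
   (delta c)(s) = sum over codimension-one faces s \ {v}. *)
Definition coboundary (c : {set 'I_n} -> 'Z_2) (s : {set 'I_n}) : 'Z_2 :=
  \sum_(v in s) c (s :\ v).

Definition H1_Z2_trivial (A : 'M[R]_n) : Prop :=
  forall c : {set 'I_n} -> 'Z_2,
    (forall s, simplex A 2 s -> coboundary c s = 0) ->
    exists f : {set 'I_n} -> 'Z_2,
      forall s, simplex A 1 s -> c s = coboundary f s.

Definition bipartite (A : 'M[R]_n) : Prop :=
  exists sigma : {set 'I_n},
    forall i j : 'I_n,
      ((i \in sigma) != (j \in sigma) -> 0 <= A i j /\ 0 <= A j i) /\
      ((i \in sigma) = (j \in sigma) -> A i j <= 0 /\ A j i <= 0).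

End Defs.

From HB Require Import structures.
From mathcomp Require Import all_boot all_order all_algebra.
Import Order.TTheory GRing.Theory Num.Theory.
Set Implicit Arguments. Unset Strict Implicit.
Local Open Scope ring_scope.

(* Assign to each edge {i, j} of G_A the class [A_ij > 0] in Z_2 (well defined by (i)).
   By (ii) every triangle has an odd number of negative edges, hence an even number of
   positive ones, so this is a 1-cocycle.  By (iii) it is the coboundary of a 0-cochain f,
   i.e. an edge is positive exactly when f differs at its endpoints; the level sets of f
   give the bipartition, non-edges carry zero entries and the diagonal is negative. *)

Lemma natrZ2_addb (a b : bool) : a%:R + b%:R = (a (+) b)%:R :> 'Z_2.
Proof. by case: a; case: b; apply/val_inj. Qed.

Lemma natrZ2_inj : injective (fun b : bool => b%:R : 'Z_2).
Proof. by case; case=> // /eqP. Qed.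

Lemma Z2_natr_eq1 (x : 'Z_2) : x = (x == 1)%:R.
Proof. by case: x => [[|[|m]] //] ltx; apply/val_inj. Qed.

Lemma cards3_triple (T : finType) (s : {set T}) : #|s| = 3%N ->
  exists x y z, [/\ x != y, y != z, x != z & s = [set x; y; z]].
Proof.
move=> s3; have [x xs] : {x | x \in s} by apply/sigW/set0Pn; rewrite -card_gt0 s3.
have /cards2P [y [z [yz sxE]]] : #|s :\ x| == 2%N.
  by move: s3; rewrite (cardsD1 x) xs add1n => -[->].
have : (y \in s :\ x) && (z \in s :\ x) by rewrite sxE !inE !eqxx orbT.
rewrite !inE => /andP [/andP [yx _] /andP [zx _]].
exists x, y, z; split; [by rewrite eq_sym | by [] | by rewrite eq_sym |].
by rewrite -(setD1K xs) sxE setUA.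
Qed.

Section Signs.
Variable R : realDomainType.

Lemma neq0_lt0r (x : R) : x != 0 -> (0 < x) = ~~ (x < 0).
Proof. by move=> x0; rewrite lt0r x0 leNgt. Qed.

Lemma sgrM_eq1 (x y : R) : Num.sg x * Num.sg y = 1 ->
  x != 0 /\ (0 < y) = (0 < x).
Proof.
rewrite -sgrM => /eqP; rewrite sgr_cp0 lt0r mulf_eq0 negb_or leNgt => /andP [].
case/andP=> x0 y0; rewrite neq0_mulr_lt0 // negb_add => /eqP xy.
by rewrite !neq0_lt0r // xy.
Qed.

Lemma sgrM3_eqN1 (x y z : R) : x != 0 -> y != 0 -> z != 0 ->
  Num.sg x * Num.sg y * Num.sg z = -1 -> (0 < x) (+) (0 < y) (+) (0 < z) = false.
Proof.
move=> x0 y0 z0; rewrite -!sgrM => /eqP; rewrite sgr_cp0.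
rewrite !neq0_mulr_lt0 ?mulf_neq0 // !neq0_lt0r //.
by rewrite !(addNb, addbN) !negbK => ->.
Qed.

End Signs.

Section Coboundary.
Variable n : nat.
Implicit Types (c : {set 'I_n} -> 'Z_2) (i j k : 'I_n).

Lemma coboundary2 c i j : i != j -> coboundary c [set i; j] = c [set i] + c [set j].
Proof.
move=> ij; rewrite /coboundary big_setU1 ?big_set1 ?inE //= setU1K ?inE // addrC.
congr (c _ + _); apply/setP=> v.
by rewrite !inE andb_orr andNb orbF andb_idl // => /eqP->.
Qed.

Lemma coboundary3 c i j k : i != j -> j != k -> i != k ->
  coboundary c [set i; j; k] = c [set j; k] + c [set i; k] + c [set i; j].
Proof.
move=> ij jk ik; have -> : [set i; j; k] = i |: (j |: [set k]).
  by apply/setP=> v; rewrite !inE orbA.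
rewrite /coboundary big_setU1 ?big_setU1 ?big_set1 ?inE ?negb_or ?ij ?ik ?jk //= addrA.
congr (c _ + c _ + c _); apply/setP=> v; rewrite !inE;
  case: (eqVneq v i) => [->|vi]; rewrite ?eqxx ?(negbTE ij) ?(negbTE ik) //=;
  case: (eqVneq v j) => [->|vj]; rewrite ?eqxx ?(negbTE jk) ?(negbTE vi) //= ?orbF //.
exact: andNb.
Qed.

End Coboundary.

Section SignedGraph.
Variables (R : realFieldType) (n : nat) (A : 'M[R]_n).
Implicit Types (i j k : 'I_n) (s : {set 'I_n}).

Lemma adjA_sym i j : adjA A i j = adjA A j i.
Proof. by rewrite /adjA eq_sym orbC. Qed.

Lemma clique_adjA s i j : clique A s -> i \in s -> j \in s -> i != j -> adjA A i j.
Proof.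
move=> /forall_inP cl si sj ij.
by have /forall_inP/(_ j sj)/implyP := cl i si; apply.
Qed.

Lemma clique2 i j : adjA A i j -> clique A [set i; j].
Proof.
move=> aij; apply/forall_inP=> x; rewrite !inE => x_ij.
apply/forall_inP=> y; rewrite !inE => y_ij; apply/implyP.
by case/orP: x_ij => /eqP->; case/orP: y_ij => /eqP->; rewrite ?eqxx // adjA_sym.
Qed.

Definition pos_cochain s : 'Z_2 :=
  [exists x in s, exists y in s, (x != y) && (0 < A x y)]%:R.

Hypothesis eps_sym : forall i j, i != j -> clique A [set i; j] ->
  eps A i j * eps A j i = 1.

Lemma adjA_sign i j : i != j -> adjA A i j ->
  A i j != 0 /\ (0 < A j i) = (0 < A i j).
Proof. by move=> ij aij; apply: sgrM_eq1; apply: eps_sym => //; apply: clique2. Qed.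

Lemma pos_cochain2 i j : i != j -> adjA A i j ->
  pos_cochain [set i; j] = (0 < A i j)%R%:R.
Proof.
move=> ij aij; have [_ ji_ij] := adjA_sign ij aij.
apply: (congr1 (fun b : bool => b%:R)); apply/idP/idP.
- case/exists_inP=> x; rewrite !inE => x_ij /exists_inP [y]; rewrite !inE => y_ij.
  case/orP: x_ij => /eqP->; case/orP: y_ij => /eqP->;
  by rewrite ?eqxx ?ji_ij // => /andP[].
- move=> pij; apply/exists_inP; exists i; rewrite ?inE ?eqxx //.
  by apply/exists_inP; exists j; rewrite ?inE ?eqxx ?orbT // ij.
Qed.

Hypothesis eps_triangle : forall i j k, i != j -> j != k -> i != k ->
  clique A [set i; j; k] -> eps A i j * eps A j k * eps A k i = -1.

Lemma pos_cochain_cocycle s : simplex A 2 s -> coboundary pos_cochain s = 0.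
Proof.
case/andP=> cl /eqP/cards3_triple [i [j [k [ij jk ik sE]]]]; rewrite {}sE in cl *.
have [aij ajk aik] : [/\ adjA A i j, adjA A j k & adjA A i k].
  by split; apply: (clique_adjA cl); rewrite ?inE ?eqxx ?orbT ?orTb.
have [nz_ij _] := adjA_sign ij aij.
have [nz_jk _] := adjA_sign jk ajk.
have ki : k != i by rewrite eq_sym.
have [nz_ki pik] := adjA_sign ki (etrans (adjA_sym k i) aik).
have tri := sgrM3_eqN1 nz_ij nz_jk nz_ki (eps_triangle ij jk ik cl).
rewrite coboundary3 // (pos_cochain2 jk ajk) (pos_cochain2 ik aik).
by rewrite (pos_cochain2 ij aij) !natrZ2_addb pik addbC addbA tri.
Qed.

Hypothesis diag_neg : forall i, A i i < 0.

Lemma bipartite_of_coboundary (f : {set 'I_n} -> 'Z_2) :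
  (forall s, simplex A 1 s -> pos_cochain s = coboundary f s) -> bipartite A.
Proof.
move=> pos_f; exists [set x | f [set x] == 1] => i j; rewrite !inE.
have [<-|ij] := eqVneq i j; first by split=> [|_]; rewrite ?eqxx // ltW.
have [aij|naij] := boolP (adjA A i j); last first.
  by move: naij; rewrite /adjA ij negb_or !negbK => /andP[/eqP-> /eqP->].
have [_ pji] := adjA_sign ij aij.
have cross : (0 < A i j) = (f [set i] == 1) (+) (f [set j] == 1).
  apply: natrZ2_inj; rewrite /= -natrZ2_addb -!Z2_natr_eq1 -coboundary2 //.
  by rewrite -pos_cochain2 // pos_f // /simplex clique2 // cards2 ij.
rewrite negb_eqb -cross; split=> [pij | same_side]; first by rewrite !ltW // pji.
by rewrite !leNgt pji cross same_side addbb.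
Qed.

End SignedGraph.

Theorem mainTheorem7 (R : realFieldType) (n : nat) (A : 'M[R]_n) :
  (forall i : 'I_n, A i i < 0) ->
  (forall i j : 'I_n, i != j -> clique A [set i; j] ->
     eps A i j * eps A j i = 1) ->
  (forall i j k : 'I_n, i != j -> j != k -> i != k ->
     clique A [set i; j; k] ->
     eps A i j * eps A j k * eps A k i = -1) ->
  H1_Z2_trivial A ->
  bipartite A.
Proof.
move=> diag_neg eps_sym eps_triangle H1_trivial.
have [f pos_f] := H1_trivial _ (pos_cochain_cocycle eps_sym eps_triangle).
exact: (bipartite_of_coboundary eps_sym diag_neg pos_f).
Qed.
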